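(* For every $\Delta\in\mathbb{N}$ there exists $k_0$ such that for all $k\ge k_0$ the following holds. Let $T$ be a tree with $k$ edges and $\Delta(T)\le\Delta$. Then there exist a matching $M$, a tree $S$ and a forest $F$, all subgraphs of $T$, whose edge sets form a partition of $E(T)$, such that: (a) $S$ and $F$ are vertex-disjoint; (b) every edge of $M$ has exactly one endpoint in $S$ and one endpoint in $F$; (c) $S$ and every component of $F$ each have at most $\lceil k/2\rceil$ vertices; (d) all vertices of $V(M)\cap V(S)$ belong to the same bipartition class of $T$; (e) the smallest subtree of $S$ containing $V(M)\cap V(S)$ has at most $\Delta^{4\Delta+1}$ vertices.
   Context: A matching is a set of pairwise vertex-disjoint edges, viewed as a subgraph. $\Delta(T)$ is the maximum degree of $T$. *)

(* Graphs on a finite vertex type V; an edge is a 2-element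
   vertex set; a (sub)graph is a pair (vertex set, edge set). *)
From mathcomp Require Import all_boot.
Set Implicit Arguments. Unset Strict Implicit. Unset Printing Implicit Defensive.

Section Graphs.
Variable V : finType.

Definition is_graph (E : {set {set V}}) : Prop := forall e, e \in E -> #|e| = 2.

(* (A, EA) is a subgraph of the graph with edge set E (vertex set all of V) *)
Definition subgraph (E : {set {set V}}) (A : {set V}) (EA : {set {set V}}) : Prop :=
  EA \subset E /\ forall e, e \in EA -> e \subset A.

Definition adj (A : {set V}) (EA : {set {set V}}) : rel V :=
  fun x y => [&& x \in A, y \in A & [set x; y] \in EA].

Definition connectedb (A : {set V}) (EA : {set {set V}}) : bool :=
  [forall x in A, forall y in A, connect (adj A EA) x y].

Definition acyclic (A : {set V}) (EA : {set {set V}}) : Prop :=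
  forall s : seq V, uniq s -> 3 <= size s -> ~~ cycle (adj A EA) s.

Definition is_tree (A : {set V}) (EA : {set {set V}}) : Prop :=
  A != set0 /\ connectedb A EA /\ acyclic A EA.

Definition is_forest (A : {set V}) (EA : {set {set V}}) : Prop := acyclic A EA.

Definition component (A : {set V}) (EA : {set {set V}}) (x : V) : {set V} :=
  [set y in A | connect (adj A EA) x y].

Definition degree (E : {set {set V}}) (v : V) : nat := #|[set e in E | v \in e]|.

Definition is_matching (EM : {set {set V}}) : Prop :=
  forall e f, e \in EM -> f \in EM -> e != f -> [disjoint e & f].

Definition edge_vertices (EM : {set {set V}}) : {set V} := \bigcup_(e in EM) e.

(* vertex set of the smallest subtree of the tree (A, EA) containing X:
   intersection of the vertex sets of all subtrees of (A, EA) containing X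
   (a subtree of a tree is determined by its vertex set, which must be
   nonempty and induce a connected subgraph). *)
Definition hull (A : {set V}) (EA : {set {set V}}) (X : {set V}) : {set V} :=
  [set v | [forall B : {set V},
     [&& B \subset A, X \subset B, B != set0 & connectedb B EA] ==> (v \in B)]].

Definition same_class (E : {set {set V}}) (B : {set V}) : Prop :=
  exists c : V -> bool, (forall x y, [set x; y] \in E -> c x != c y) /\
    (forall x y, x \in B -> y \in B -> c x = c y).

End Graphs.

From mathcomp Require Import all_boot zify.
Set Implicit Arguments. Unset Strict Implicit. Unset Printing Implicit Defensive.

(* Root T at r and let c be a vertex with more than ⌈k/2⌉ descendants but whose
   child subtrees all have at most ⌈k/2⌉ vertices; then so has T minus the subtree
   of c.  S is the subtree of c from which, at every vertex a at relative depth
   2, 4, ..., 2R below c, the subtree of the heaviest child of a is cut off; M is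
   made of the cut edges and of the edge from c to its parent, and F of the rest.
   Every component of F lies in a child subtree of c or outside the subtree of c.
   Cutting at even depths only puts the matched vertices of S in the colour class
   of c and within distance 2R of c, which gives (d) and (e) for R = 2Δ.  Each cut
   removes at least a 1/(Δ-1) share of what hangs below its vertex, so the part of
   S below depth 2R+2 has at most ((Δ-2)/(Δ-1))^R |T| <= |T|/3 vertices, and
   |S| <= Δ^(4Δ+2) + (k+1)/3 <= ⌈k/2⌉ for k large. *)

Lemma bernoulli_expn d m : d ^ m * (d + m) <= d * (d + 1) ^ m.
Proof.
elim: m => [|m IH]; first by rewrite !expn0 mul1n muln1 addn0.
rewrite !expnS; set X := d ^ m; set Y := (d + 1) ^ m.
have step : d * X * (d + m.+1) <= X * (d + m) * (d + 1) by nia.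
by apply: (leq_trans step); rewrite mulnCA mulnC leq_mul2l IH orbT.
Qed.

(* Bernoulli: ((D - 1) / (D - 2)) ^ (2 D) >= 1 + 2 D / (D - 2) >= 3. *)
Lemma three_expn_le D : 2 <= D -> 3 * (D - 2) ^ (2 * D) <= (D - 1) ^ (2 * D).
Proof.
move=> D_ge2; have -> : D - 1 = (D - 2) + 1 by lia.
case: (posnP (D - 2)) => [->|pos]; first by rewrite exp0n; lia.
rewrite -(leq_pmul2l pos); apply: leq_trans (bernoulli_expn _ _).
by rewrite mulnA [X in _ <= X]mulnC leq_mul2r; apply/orP; right; lia.
Qed.

Lemma three_mul_le a b w n : 0 < a -> a * w <= b * n -> 3 * b <= a -> 3 * w <= n.
Proof.
move=> a_gt0 awbn ab; have [b0|b_gt0] := posnP b; first by move: awbn; rewrite b0; nia.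
by rewrite -(leq_pmul2l b_gt0); nia.
Qed.

Lemma card_fiber (T : finType) (A Y : {set T}) (f : T -> T) :
  {in A, forall x, f x \in Y} ->
  #|A| = \sum_(y in Y) #|[set x in A | f x == y]|.
Proof.
move=> fAY; rewrite -sum1_card (partition_big f (mem Y)) //=.
by apply: eq_bigr => y _; rewrite -sum1_card; apply: eq_bigl => x; rewrite inE.
Qed.

Lemma connect_closed_in (T : finType) (e : rel T) (X : {set T}) x y :
  (forall u w, u \in X -> e u w -> w \in X) -> x \in X -> connect e x y -> y \in X.
Proof.
move=> closedX + /connectP [s es ->]; elim: s x es => [|z s IH] x //= /andP [exz es] Xx.
exact: IH es (closedX _ _ Xx exz).
Qed.

Lemma setI2_mem (T : finType) (A : {set T}) s t : s \in A -> t \notin A ->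
  [set s; t] :&: A = [set s].
Proof.
move=> sA tA; apply/setP => x; rewrite !inE.
by have [->|_] := eqVneq x s; [rewrite sA | have [->|] := eqVneq x t; rewrite ?(negbTE tA)].
Qed.

Section Graphs.
Variable V : finType.

Lemma adj_sym (A : {set V}) (EA : {set {set V}}) : connect_sym (adj A EA).
Proof. by apply: sym_connect_sym => u v; rewrite /adj setUC andbCA. Qed.

Lemma adjT (E : {set {set V}}) x y : adj [set: V] E x y = ([set x; y] \in E).
Proof. by rewrite /adj !inE. Qed.

Lemma acyclic_subgraph (A : {set V}) (E EA : {set {set V}}) :
  acyclic [set: V] E -> EA \subset E -> acyclic A EA.
Proof.
move=> acyc EA_E s uniq_s size_s; apply: contra (acyc s uniq_s size_s).
by apply: sub_cycle => x y /and3P [_ _ /(subsetP EA_E) xyE]; rewrite adjT.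
Qed.

End Graphs.

Section RootedTree.
Variables (V : finType) (E : {set {set V}}).
Hypothesis E_graph : is_graph E.
Hypothesis E_conn : connectedb [set: V] E.
Hypothesis E_acyclic : acyclic [set: V] E.

Lemma edge_neq x y : [set x; y] \in E -> x != y.
Proof. by move=> /E_graph; apply: contraPneq => ->; rewrite setUid cards1. Qed.

Lemma edge_removal_disconnects x y : [set x; y] \in E ->
  ~~ connect (adj [set: V] (E :\ [set x; y])) x y.
Proof.
move=> xyE; have x_y := edge_neq xyE; apply/negP => /connectP [s s_path s_last].
case: (shortenP s_path) s_last => -[|z [|w s']] s'_path s'_uniq _ /= s'_last.
- by rewrite s'_last eqxx in x_y.
- by move: s'_path; rewrite /= -s'_last andbT /adj !inE eqxx andbF.
(* an x-y path avoiding the edge xy closes a cycle with it *)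
apply: (negP (E_acyclic s'_uniq isT)).
rewrite /cycle rcons_path; apply/andP; split.
  apply: sub_path s'_path => a b; rewrite /adj => /and3P [-> ->].
  by rewrite inE => /andP [_ ->].
by rewrite /= in s'_last *; rewrite -s'_last adjT setUC.
Qed.

Variable r : V.

Definition reach n :=
  iter n (fun B : {set V} => B :|: [set y | [exists x in B, [set x; y] \in E]]) [set r].

Lemma reach_exists x : exists n, x \in reach n.
Proof.
have /connectP [s s_path ->] : connect (adj [set: V] E) r x.
  by move/forallP: E_conn => /(_ r) /implyP /(_ (in_setT _)) /forallP /(_ x)
    /implyP /(_ (in_setT _)).
have : r \in reach 0 by rewrite /= inE.
elim: s 0 r s_path => [|z s IH] n y /=; first by exists n.
move=> /andP [yz s_path] y_n; apply: (IH n.+1) => //=.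
by rewrite inE; apply/orP; right; rewrite inE; apply/existsP; exists y; rewrite y_n -adjT.
Qed.

Definition depth x := ex_minn (reach_exists x).

Lemma reach_depth x : x \in reach (depth x).
Proof. by rewrite /depth; case: ex_minnP. Qed.

Lemma depth_min x n : x \in reach n -> depth x <= n.
Proof. by rewrite /depth; case: ex_minnP => m _ min_m /min_m. Qed.

Lemma depth_root : depth r = 0.
Proof. by apply/eqP; rewrite -leqn0; apply: depth_min; rewrite /= inE. Qed.

Lemma depth_eq0 x : (depth x == 0) = (x == r).
Proof.
apply/eqP/eqP => [x0|->]; last exact: depth_root.
by have := reach_depth x; rewrite x0 /= inE => /eqP.
Qed.

Definition parent x :=
  if [pick w | ([set w; x] \in E) && ((depth w).+1 == depth x)] is Some w then w else r.

Lemma parent_spec x : x != r ->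
  [set x; parent x] \in E /\ (depth (parent x)).+1 = depth x.
Proof.
move=> x_r; rewrite /parent; case: pickP => [w /andP [wxE /eqP <-]|no_w].
  by rewrite setUC.
exfalso; case dx: (depth x) => [|m]; first by move/eqP: dx; rewrite depth_eq0 (negbTE x_r).
have := reach_depth x; rewrite dx /= inE => /orP [/depth_min|]; first by rewrite dx ltnn.
rewrite inE => /existsP [w /andP [w_m wxE]].
have dw : depth w <= m by apply: depth_min.
have : x \in reach (depth w).+1.
  rewrite /= inE; apply/orP; right.
  by rewrite inE; apply/existsP; exists w; rewrite reach_depth.
move/depth_min; rewrite dx ltnS => mw.
by move: (no_w w); rewrite wxE dx eqSS eqn_leq dw mw.
Qed.

Lemma parent_edge x : x != r -> [set x; parent x] \in E.
Proof. by case/parent_spec. Qed.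

Lemma depth_parent x : x != r -> (depth (parent x)).+1 = depth x.
Proof. by case/parent_spec. Qed.

Lemma depth_gt0 x : (0 < depth x) = (x != r).
Proof. by rewrite lt0n depth_eq0. Qed.

Lemma depth_parent_le x : depth (parent x) <= depth x.
Proof.
have [->|x_r] := eqVneq x r; last by rewrite -(depth_parent x_r).
by rewrite /parent; case: pickP => [w /andP [_]|//]; rewrite depth_root.
Qed.

Lemma parent_neq x : x != r -> parent x != x.
Proof. by move/depth_parent => dx; apply/eqP => px; rewrite px in dx; lia. Qed.

Lemma connect_root_avoid (f : {set V}) : (forall z, z != r -> [set z; parent z] != f) ->
  forall z, connect (adj [set: V] (E :\ f)) z r.
Proof.
move=> avoid z; elim: {z} (depth z) {-2}z (erefl (depth z)) => [|n IH] z dz.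
  by move/eqP: dz; rewrite depth_eq0 => /eqP ->.
have z_r : z != r by rewrite -depth_gt0 dz.
apply: connect_trans (IH (parent z) _); last by move: (depth_parent z_r); rewrite dz => -[].
by apply: connect1; rewrite adjT !inE avoid // parent_edge.
Qed.

Lemma edge_parent x y : [set x; y] \in E ->
  (x != r /\ y = parent x) \/ (y != r /\ x = parent y).
Proof.
move=> xyE; have x_y := edge_neq xyE.
have [/andP [x_r /eqP yx]|not_px] := boolP ((x != r) && (y == parent x)); first by left.
have [/andP [y_r /eqP xy]|not_py] := boolP ((y != r) && (x == parent y)); first by right.
exfalso; apply: (negP (edge_removal_disconnects xyE)).
have avoid z : z != r -> [set z; parent z] != [set x; y].
  move=> z_r; apply/eqP => zxy; have pz_neq := parent_neq z_r.
  have /set2P z_xy : z \in [set x; y] by rewrite -zxy set21.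
  have /set2P pz_xy : parent z \in [set x; y] by rewrite -zxy set22.
  case: z_xy pz_xy => ? [] pz; subst z; rewrite pz ?eqxx // in pz_neq.
    by move: not_px; rewrite z_r pz eqxx.
  by move: not_py; rewrite z_r pz eqxx.
apply: connect_trans (connect_root_avoid avoid x) _.
by rewrite adj_sym; apply: connect_root_avoid.
Qed.

Lemma edge_parentE e : e \in E -> exists2 z, z != r & e = [set z; parent z].
Proof.
move=> eE; have /eqP /cards2P [x [y [x_y exy]]] := E_graph eE; rewrite exy in eE *.
by case: (edge_parent eE) => -[z_r ->]; [exists x | exists y; rewrite // setUC].
Qed.

Lemma card_edges : #|E|.+1 = #|V|.
Proof.
have edge_inj : {in [set~ r] &, injective (fun z => [set z; parent z])}.
  move=> z z'; rewrite !inE => z_r z'_r zz'.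
  have /set2P [//|z_pz'] : z \in [set z'; parent z'] by rewrite -zz' set21.
  have /set2P [//|z'_pz] : z' \in [set z; parent z] by rewrite zz' set21.
  by have := depth_parent z_r; have := depth_parent z'_r; rewrite -z_pz' -z'_pz; lia.
have -> : E = [set [set z; parent z] | z in [set~ r]].
  apply/setP => e; apply/idP/imsetP => [/edge_parentE [z z_r ->]|[z]].
    by exists z; rewrite // !inE.
  by rewrite !inE => z_r ->; apply: parent_edge.
by rewrite (card_in_imset edge_inj) cardsC1 prednK //; apply/card_gt0P; exists r.
Qed.

Definition ancestor a x := (depth a <= depth x) && (iter (depth x - depth a) parent x == a).
Definition ancestor_at l x := iter (depth x - l) parent x.
Definition desc a := [set x | ancestor a x].
Definition child z a := (z != r) && (parent z == a).
Definition children a := [set z | child z a].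

Lemma in_desc a x : (x \in desc a) = ancestor a x.
Proof. by rewrite inE. Qed.

Lemma depth_iter_parent n x : n <= depth x -> depth (iter n parent x) = depth x - n.
Proof.
elim: n => [|n IH] n_x /=; first by rewrite subn0.
have := IH (ltnW n_x) => dn; have : iter n parent x != r by rewrite -depth_gt0; lia.
by move/depth_parent; lia.
Qed.

Lemma ancestor_refl x : ancestor x x.
Proof. by rewrite /ancestor leqnn subnn eqxx. Qed.

Lemma ancestor_depth a x : ancestor a x -> depth a <= depth x.
Proof. by case/andP. Qed.

Lemma ancestor_depth_eq a x : ancestor a x -> depth a = depth x -> a = x.
Proof. by move=> /andP [_ /eqP ax] dax; rewrite -ax dax subnn. Qed.

Lemma ancestor_depth_lt a x : ancestor a x -> x != a -> depth a < depth x.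
Proof.
move=> ax; rewrite ltn_neqAle ancestor_depth // andbT.
by apply: contraNneq => /(ancestor_depth_eq ax) ->.
Qed.

Lemma ancestor_parent a x : ancestor a x -> x != a -> ancestor a (parent x).
Proof.
move=> ax x_a; have lt_ax := ancestor_depth_lt ax x_a.
have x_r : x != r by rewrite -depth_gt0; lia.
have dx := depth_parent x_r; case/andP: ax => _ /eqP ax.
rewrite /ancestor; apply/andP; split; first lia.
have -> : depth (parent x) - depth a = (depth x - depth a).-1 by lia.
by rewrite -iterSr prednK ?ax //; lia.
Qed.

Lemma ancestor_child a x : x != r -> ancestor a (parent x) -> ancestor a x.
Proof.
move=> x_r /andP [le_ap /eqP apx]; have dx := depth_parent x_r.
rewrite /ancestor; apply/andP; split; first lia.
have -> : depth x - depth a = (depth (parent x) - depth a).+1 by lia.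
by rewrite iterSr apx.
Qed.

Lemma ancestor_trans b a x : ancestor a b -> ancestor b x -> ancestor a x.
Proof.
move=> /andP [le_ab /eqP ab] /andP [le_bx /eqP bx].
rewrite /ancestor; apply/andP; split; first lia.
have -> : depth x - depth a = (depth b - depth a) + (depth x - depth b) by lia.
by rewrite iterD bx ab.
Qed.

Lemma ancestor_chain a b x :
  ancestor a x -> ancestor b x -> depth a <= depth b -> ancestor a b.
Proof.
move=> /andP [le_ax /eqP ax] /andP [le_bx /eqP bx] le_ab.
have e : depth x - depth a = (depth b - depth a) + (depth x - depth b) by lia.
by move: ax; rewrite /ancestor le_ab e iterD bx => ->; rewrite eqxx.
Qed.

Lemma ancestor_root x : ancestor r x.
Proof.
rewrite /ancestor depth_root subn0 leq0n -depth_eq0.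
by rewrite depth_iter_parent // subnn.
Qed.

Lemma ancestor_atP l x : l <= depth x ->
  ancestor (ancestor_at l x) x /\ depth (ancestor_at l x) = l.
Proof.
move=> l_x; have dl : depth (ancestor_at l x) = l by rewrite depth_iter_parent; lia.
by rewrite /ancestor dl l_x eqxx.
Qed.

Lemma ancestor_atE a x : ancestor a x -> ancestor_at (depth a) x = a.
Proof. by case/andP => _ /eqP. Qed.

Lemma child_ancestor z a : child z a -> ancestor a z.
Proof. by case/andP => z_r /eqP <-; apply: ancestor_child => //; apply: ancestor_refl. Qed.

Lemma child_depth z a : child z a -> depth z = (depth a).+1.
Proof. by case/andP => z_r /eqP <-; rewrite depth_parent. Qed.

Lemma desc_child_sub z a : child z a -> desc z \subset desc a :\ a.
Proof.
move=> za; apply/subsetP => y; rewrite in_setD1 !in_desc => zy.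
rewrite (ancestor_trans (child_ancestor za) zy) andbT.
by apply: contraTneq (ancestor_depth zy) => ->; rewrite (child_depth za) ltnn.
Qed.

Lemma child_ancestor_at a x : ancestor a x -> x != a ->
  child (ancestor_at (depth a).+1 x) a /\ ancestor (ancestor_at (depth a).+1 x) x.
Proof.
move=> ax x_a; have [zx dz] := ancestor_atP (ancestor_depth_lt ax x_a).
set z := ancestor_at _ x in zx dz *; have z_r : z != r by rewrite -depth_gt0 dz.
split => //; rewrite /child z_r /=.
have pz_x : ancestor (parent z) x.
  by apply: ancestor_trans zx; apply: child_ancestor; rewrite /child z_r /=.
have dpz : depth (parent z) = depth a by have := depth_parent z_r; rewrite dz => -[].
by rewrite -(ancestor_atE pz_x) dpz ancestor_atE.
Qed.

Lemma card_children x : #|children x| + (x != r) <= degree E x.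
Proof.
rewrite /degree; set I := [set e in E | x \in e].
have edge_inj : {in children x &, injective (fun z => [set z; x])}.
  move=> z z'; rewrite !inE => /andP [z_r /eqP pz] _ zz'.
  have /set2P [//|zx] : z \in [set z'; x] by rewrite -zz' set21.
  by have := parent_neq z_r; rewrite pz zx eqxx.
have sub_I : [set [set z; x] | z in children x] \subset I.
  apply/subsetP => _ /imsetP [z /[!inE] /andP [z_r /eqP <-] ->].
  by rewrite set22 andbT parent_edge.
rewrite -(card_in_imset edge_inj); case: (boolP (x != r)) => x_r; last first.
  by rewrite addn0 subset_leq_card.
rewrite addn1; apply: proper_card; rewrite properE sub_I /=.
apply/subsetPn; exists [set x; parent x]; first by rewrite inE parent_edge // set21.
apply/imsetP => -[z /[!inE] /andP [z_r /eqP pz] xpz].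
have /set2P [pxz|pxx] : parent x \in [set z; x] by rewrite -xpz set22.
  by have := depth_parent z_r; have := depth_parent x_r; rewrite pz pxz; lia.
by have := parent_neq x_r; rewrite pxx eqxx.
Qed.

Definition heavy a :=
  if [pick z | child z a] is Some z0 then [arg max_(z > z0 | child z a) #|desc z|] else a.

Lemma heavyP a z : child z a -> child (heavy a) a /\ #|desc z| <= #|desc (heavy a)|.
Proof.
rewrite /heavy; case: pickP => [z0 z0a|/(_ z) -> //].
by case: arg_maxnP => // b ba max_b za; split; last exact: max_b.
Qed.

Lemma exists_balanced_vertex h : #|V| <= h.*2.+1 -> h < #|V| ->
  exists c, (forall z, child z c -> #|desc z| <= h) /\ #|~: desc c| <= h.
Proof.
move=> V_le V_gt; have desc_r : h < #|desc r|.
  by rewrite (_ : desc r = setT) ?cardsT //; apply/setP => x; rewrite in_desc ancestor_root inE.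
(* a large subtree of minimal size has only small child subtrees *)
case: (@arg_minnP _ r (fun x => h < #|desc x|) (fun x => #|desc x|) desc_r).
move=> c c_large c_min; exists c; split; last by have := cardsC (desc c); lia.
move=> z zc; rewrite leqNgt; apply/negP => /c_min; apply/negP; rewrite -ltnNge.
apply/proper_card/(sub_proper_trans (desc_child_sub zc)).
by rewrite properD1 // in_desc ancestor_refl.
Qed.

Lemma small_degree_card (D : nat) : D <= 1 -> (forall v, degree E v <= D) -> #|V| <= 2.
Proof.
move=> D_le1 degree_le; have children_le x := leq_trans (card_children x) (degree_le x).
have : [set~ r] \subset children r.
  apply/subsetP => x; rewrite !inE => x_r; rewrite /child x_r /=.
  apply: contraT => px_r; have := children_le (parent x); rewrite px_r.
  have : 0 < #|children (parent x)| by apply/card_gt0P; exists x; rewrite inE /child x_r eqxx.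
  lia.
move/subset_leq_card; rewrite cardsC1; have := children_le r; rewrite eqxx /=; lia.
Qed.

Section Core.
Variables (c : V) (R : nat).

Definition cut_vertex a :=
  [&& ancestor c a, depth c + 2 <= depth a, depth a <= depth c + 2 * R,
      ~~ odd (depth a - depth c) & child (heavy a) a].

Definition core :=
  [set x | ancestor c x && ~~ [exists a, cut_vertex a && ancestor (heavy a) x]].
Definition core_edges := [set e in E | e \subset core].
Definition forest_edges := [set e in E | e \subset ~: core].
Definition matching_edges := E :\: (core_edges :|: forest_edges).
Definition partner s := if s == c then parent c else heavy s.

Lemma cut_vertex_depth a : cut_vertex a -> depth c + 2 <= depth a.
Proof. by case/and5P. Qed.

Lemma cut_vertex_heavy a : cut_vertex a -> child (heavy a) a.
Proof. by case/and5P. Qed.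

Lemma cut_vertex_neq a : cut_vertex a -> a != c.
Proof. by move/cut_vertex_depth; apply: contraTneq => ->; lia. Qed.

Lemma core_c : c \in core.
Proof.
rewrite inE ancestor_refl /=; apply/existsP => -[a /andP [cut_a /ancestor_depth]].
by rewrite (child_depth (cut_vertex_heavy cut_a)); have := cut_vertex_depth cut_a; lia.
Qed.

Lemma core_ancestor x : x \in core -> ancestor c x.
Proof. by rewrite inE => /andP []. Qed.

Lemma core_ancestor_closed a x : x \in core -> ancestor a x -> ancestor c a -> a \in core.
Proof.
rewrite !inE => /andP [_ no_cut] ax ->; apply: contra no_cut => /existsP [b /andP [cut_b ba]].
by apply/existsP; exists b; rewrite cut_b (ancestor_trans ba).
Qed.

Lemma core_parent x : x \in core -> x != c -> parent x \in core.
Proof.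
move=> x_core x_c; have cx := core_ancestor x_core.
have x_r : x != r by rewrite -depth_gt0; have := ancestor_depth_lt cx x_c; lia.
apply: (core_ancestor_closed x_core); last exact: ancestor_parent.
by apply: ancestor_child => //; apply: ancestor_refl.
Qed.

Lemma core_exit x : x \notin core -> parent x \in core -> x != r ->
  cut_vertex (parent x) /\ x = heavy (parent x).
Proof.
move=> x_core px_core x_r.
have cx : ancestor c x by apply: ancestor_child => //; apply: core_ancestor.
move: x_core; rewrite inE cx negbK => /existsP [a /andP [cut_a hx]].
suff x_h : x = heavy a.
  by have /andP [_ /eqP pha] := cut_vertex_heavy cut_a; rewrite x_h pha.
apply: contraTeq px_core => x_h; rewrite inE negb_and negbK; apply/orP; right.
by apply/existsP; exists a; rewrite cut_a ancestor_parent // eq_sym.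
Qed.

Lemma in_matching_edges e :
  (e \in matching_edges) = [&& e \in E, ~~ (e \subset core) & ~~ (e \subset ~: core)].
Proof. by rewrite !inE; case: (e \in E); case: (e \subset core); case: (e \subset ~: core). Qed.

Lemma matching_edgeP e : e \in matching_edges -> exists s,
  [/\ e = [set s; partner s], s \in core, partner s \notin core & (s == c) || cut_vertex s].
Proof.
rewrite in_matching_edges => /and3P [/edge_parentE [z z_r ->]].
rewrite !subUset !sub1set !in_setC !negb_and !negbK.
have [z_core /= pz_core _|z_core _ /= pz_core] := boolP (z \in core).
  have z_c : z == c by apply: contraNT pz_core; apply: core_parent.
  by move/eqP: z_c => z_c; subst z; exists c; rewrite /partner eqxx.
have [cut_pz hz] := core_exit z_core pz_core z_r.
by exists (parent z); rewrite /partner (negbTE (cut_vertex_neq cut_pz)) -hz setUC cut_pz orbT.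
Qed.

Lemma partner_inj s1 s2 : (s1 == c) || cut_vertex s1 -> (s2 == c) || cut_vertex s2 ->
  partner s1 = partner s2 -> s1 = s2.
Proof.
have parent_partner s : cut_vertex s -> parent (partner s) = s.
  move=> cut_s; rewrite /partner (negbTE (cut_vertex_neq cut_s)).
  by case/andP: (cut_vertex_heavy cut_s) => _ /eqP.
(* the partner of c is no deeper than c, that of a cut vertex lies strictly below c *)
have deep_partner s : cut_vertex s -> depth (partner s) != depth (partner c).
  move=> cut_s; rewrite /partner eqxx (negbTE (cut_vertex_neq cut_s)).
  rewrite (child_depth (cut_vertex_heavy cut_s)).
  by have := cut_vertex_depth cut_s; have := depth_parent_le c; lia.
case/orP => [/eqP -> | cut1] /orP [/eqP -> // | cut2] same.
- by have := deep_partner _ cut2; rewrite same eqxx.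
- by have := deep_partner _ cut1; rewrite same eqxx.
by rewrite -(parent_partner _ cut1) same parent_partner.
Qed.

Lemma matching_edges_matching : is_matching matching_edges.
Proof.
move=> e f /matching_edgeP [s [-> s_core ps_core s_ok]].
move=> /matching_edgeP [t [-> t_core pt_core t_ok]].
apply: contraR => /pred0Pn [v /andP /= [/set2P v_s /set2P v_t]].
suff -> : s = t by [].
case: v_s v_t => -> [] v_t; first by [].
- by move: pt_core; rewrite -v_t s_core.
- by move: ps_core; rewrite v_t t_core.
exact: partner_inj.
Qed.

Lemma matching_edge_split e : e \in matching_edges ->
  #|e :&: core| = 1 /\ #|e :&: ~: core| = 1.
Proof.
case/matching_edgeP => s [-> s_core ps_core _].
split; first by rewrite (setI2_mem s_core ps_core) cards1.
by rewrite setUC setI2_mem ?cards1 // inE ?negbK.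
Qed.

Definition desc_upto m := [set y | ancestor c y && (depth y <= depth c + m)].

Lemma connect_core_sub (B : {set V}) : B \subset core ->
  (forall x, x \in B -> x != c -> parent x \in B) ->
  forall x, x \in B -> connect (adj B core_edges) x c.
Proof.
move=> B_core B_up x.
elim: {x} (depth x - depth c) {-2}x (erefl (depth x - depth c)) => [|n IH] x.
  move=> dx /(subsetP B_core) /core_ancestor cx.
  by rewrite (ancestor_depth_eq cx) //; have := ancestor_depth cx; lia.
move=> dx xB; have x_core := subsetP B_core x xB.
have x_c : x != c by apply/eqP => xc; rewrite xc subnn in dx.
have x_r : x != r.
  by rewrite -depth_gt0; have := ancestor_depth_lt (core_ancestor x_core) x_c; lia.
have pxB := B_up x xB x_c; have dpx := depth_parent x_r.
apply: connect_trans (IH (parent x) _ pxB); last lia.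
apply: connect1; rewrite /adj xB pxB inE parent_edge //.
by rewrite subUset !sub1set x_core (subsetP B_core).
Qed.

Lemma connectedb_core_sub (B : {set V}) : B \subset core ->
  (forall x, x \in B -> x != c -> parent x \in B) -> connectedb B core_edges.
Proof.
move=> B_core B_up; apply/forallP => x; apply/implyP => xB.
apply/forallP => y; apply/implyP => yB.
apply: connect_trans (connect_core_sub B_core B_up xB) _.
by rewrite adj_sym; apply: connect_core_sub.
Qed.

Lemma core_subgraph : subgraph E core core_edges.
Proof. by split; [apply/subsetP => e /[!inE] /andP [] | move=> e /[!inE] /andP []]. Qed.

Lemma forest_subgraph : subgraph E (~: core) forest_edges.
Proof. by split; [apply/subsetP => e /[!inE] /andP [] | move=> e /[!inE] /andP []]. Qed.

Lemma core_tree : is_tree core core_edges.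
Proof.
split; first by apply/set0Pn; exists c; apply: core_c.
split; first by apply: connectedb_core_sub => //; apply: core_parent.
exact: acyclic_subgraph E_acyclic core_subgraph.1.
Qed.

Lemma forest_edges_forest : is_forest (~: core) forest_edges.
Proof. exact: acyclic_subgraph E_acyclic forest_subgraph.1. Qed.

Lemma edge_partition : [/\ [disjoint core_edges & forest_edges],
  [disjoint core_edges & matching_edges], [disjoint forest_edges & matching_edges]
  & core_edges :|: forest_edges :|: matching_edges = E].
Proof.
split; try by rewrite -setI_eq0; apply/eqP/setP => e;
  rewrite in_setI in_matching_edges !inE;
  case: (e \in E); case: (e \subset core); case: (e \subset ~: core).
- rewrite -setI_eq0; apply/eqP/setP => e; rewrite !inE.
  apply/negP => /andP [/andP [eE e_core] /andP [_ e_out]].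
  have /card_gt0P [x xe] : 0 < #|e| by rewrite (E_graph eE).
  by have := subsetP e_out x xe; rewrite inE (subsetP e_core x xe).
- by apply/setP => e; rewrite !in_setU in_matching_edges !inE;
    case: (e \in E); case: (e \subset core); case: (e \subset ~: core).
Qed.

Lemma matching_core_vertex v :
  v \in edge_vertices matching_edges :&: core -> (v == c) || cut_vertex v.
Proof.
rewrite inE => /andP [/bigcupP [e /matching_edgeP [s [-> s_core ps_core s_ok]]] + v_core].
by case/set2P => v_s; subst v; rewrite ?v_core in ps_core.
Qed.

Lemma matching_core_same_class : same_class E (edge_vertices matching_edges :&: core).
Proof.
exists (fun x => odd (depth x)); split.
  move=> x y /edge_parent [] [z_r ->]; rewrite -(depth_parent z_r) oddS;
    by case: (odd _).
suff even_rel v :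
    v \in edge_vertices matching_edges :&: core -> odd (depth v) = odd (depth c).
  by move=> x y /even_rel -> /even_rel ->.
move=> /matching_core_vertex /orP [/eqP -> // | /and5P [cv _ _ even_v _]].
by move: even_v; rewrite oddB ?ancestor_depth //; case: (odd (depth v)); case: (odd (depth c)).
Qed.

Lemma card_hull_core :
  #|hull core core_edges (edge_vertices matching_edges :&: core)| <= #|desc_upto (2 * R)|.
Proof.
set B := core :&: desc_upto (2 * R).
have B_core : B \subset core by apply: subsetIl.
apply: (@leq_trans #|B|); last by apply/subset_leq_card/subsetIr.
apply: subset_leq_card; apply/subsetP => v; rewrite inE => /forallP /(_ B) /implyP; apply.
apply/and4P; split => //.
- apply/subsetP => x x_m; have x_core : x \in core by move: x_m; rewrite inE => /andP [].
  rewrite in_setI x_core inE core_ancestor //=.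
  by case/orP: (matching_core_vertex x_m) => [/eqP -> | /and5P [_ _ ? _ _]]; lia.
- by apply/set0Pn; exists c; rewrite in_setI core_c inE ancestor_refl; lia.
apply: connectedb_core_sub => // x /setIP [x_core]; rewrite inE => /andP [cx x_m] x_c.
rewrite in_setI core_parent // inE ancestor_parent //=; have := depth_parent_le x; lia.
Qed.

Lemma card_component_le (X : {set V}) x : x \in X ->
  (forall u w, u \in X -> u \notin core -> w \notin core -> [set u; w] \in E -> w \in X) ->
  #|component (~: core) forest_edges x| <= #|X|.
Proof.
move=> xX X_closed; apply/subset_leq_card/subsetP => y; rewrite inE => /andP [_].
apply: connect_closed_in xX => u w uX /and3P [u_out w_out /[!inE] /andP [uwE _]].
by apply: (X_closed u); rewrite // -in_setC.
Qed.

Lemma forest_step_desc z u w : child z c -> u \in desc z -> w \notin core ->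
  [set u; w] \in E -> w \in desc z.
Proof.
move=> zc; rewrite !in_desc => zu w_core.
case/edge_parent => [[u_r w_pu] | [w_r u_pw]]; last by apply: ancestor_child; rewrite -?u_pw.
rewrite w_pu; apply: ancestor_parent => //; apply: contraNneq w_core => uz.
by rewrite w_pu uz; case/andP: zc => _ /eqP ->; apply: core_c.
Qed.

Lemma forest_step_out u w : u \notin desc c -> w \notin core ->
  [set u; w] \in E -> w \notin desc c.
Proof.
rewrite !in_desc => cu w_core.
case/edge_parent => [[u_r w_pu] | [w_r u_pw]]; apply: contra cu => cw.
  by apply: ancestor_child; rewrite -?w_pu.
by rewrite u_pw ancestor_parent //; apply: contraNneq w_core => wc; rewrite wc core_c.
Qed.

Section Balanced.
Variable h : nat.
Hypothesis desc_child_small : forall z, child z c -> #|desc z| <= h.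
Hypothesis outside_small : #|~: desc c| <= h.

Lemma card_forest_component x : x \in ~: core -> #|component (~: core) forest_edges x| <= h.
Proof.
rewrite inE => x_core; have [cx|cx] := boolP (ancestor c x).
  have x_c : x != c by apply: contraNneq x_core => ->; apply: core_c.
  have [zc zx] := child_ancestor_at cx x_c.
  apply: leq_trans (desc_child_small zc); apply: card_component_le; first by rewrite inE.
  by move=> u w uX _; apply: forest_step_desc.
apply: leq_trans outside_small; apply: card_component_le; first by rewrite !inE.
by move=> u w; rewrite !in_setC => uX _; apply: forest_step_out.
Qed.

End Balanced.

Section BoundedDegree.
Variable D : nat.
Hypothesis degree_le : forall v, degree E v <= D.

Definition desc_at l := [set y | ancestor c y && (depth y == depth c + l)].

Definition below_core L :=
  [set y | [&& ancestor c y, L <= depth y & ancestor_at L y \in core]].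

Lemma card_children_le x : #|children x| + (x != r) <= D.
Proof. exact: leq_trans (card_children x) (degree_le x). Qed.

Lemma desc_at0 : desc_at 0 = [set c].
Proof.
apply/setP => y; rewrite !inE addn0; apply/idP/eqP => [/andP [cy /eqP dy]|->].
  by rewrite (ancestor_depth_eq cy (esym dy)).
by rewrite ancestor_refl eqxx.
Qed.

Lemma card_desc_at l : #|desc_at l| <= D ^ l.
Proof.
elim: l => [|l IH]; first by rewrite desc_at0 cards1.
have parent_at : {in desc_at l.+1, forall y, parent y \in desc_at l}.
  move=> y /[!inE] /andP [cy /eqP dy]; have y_r : y != r by rewrite -depth_gt0 dy addnS.
  have y_c : y != c by apply/eqP => yc; rewrite yc in dy; lia.
  by rewrite ancestor_parent //=; have := depth_parent y_r; lia.
rewrite (card_fiber parent_at) expnS mulnC.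
apply: (@leq_trans (\sum_(x in desc_at l) D)); last by rewrite sum_nat_const leq_mul2r IH orbT.
apply: leq_sum => x _; apply: leq_trans (leq_trans (leq_addr _ _) (card_children_le x)).
apply/subset_leq_card/subsetP => y /[!inE] /andP [/andP [_ /eqP dy] pyx].
by rewrite /child pyx andbT -depth_gt0 dy addnS.
Qed.

Lemma card_desc_upto m : 2 <= D -> #|desc_upto m| < D ^ m.+1.
Proof.
move=> D_ge2; elim: m => [|m IH].
  suff -> : desc_upto 0 = desc_at 0 by rewrite desc_at0 cards1 expn1.
  apply/setP => y; rewrite !inE !addn0; apply: andb_id2l => /ancestor_depth cy.
  by rewrite eqn_leq cy andbT.
have : desc_upto m.+1 \subset desc_upto m :|: desc_at m.+1.
  by apply/subsetP => y /[!inE] /andP [-> ?] /=; lia.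
move/subset_leq_card/leq_ltn_trans; apply; apply: leq_ltn_trans (leq_card_setU _ _) _.
have := card_desc_at m.+1; rewrite (expnS D m.+1).
have : 2 * D ^ m.+1 <= D * D ^ m.+1 by rewrite leq_mul2r D_ge2 orbT.
lia.
Qed.


Lemma in_below_core L y :
  (y \in below_core L) = [&& ancestor c y, L <= depth y & ancestor_at L y \in core].
Proof. by rewrite in_set. Qed.

Lemma below_core_fiber x : x \in core ->
  [set y in below_core (depth x) | ancestor_at (depth x) y == x] = desc x.
Proof.
move=> x_core; apply/setP => y; rewrite in_set in_below_core in_desc; apply/idP/idP.
  by move=> /andP [/and3P [_ x_y _] /eqP <-]; case: (ancestor_atP x_y).
move=> xy; rewrite ancestor_atE // eqxx ancestor_depth // x_core !andbT.
exact: ancestor_trans (core_ancestor x_core) xy.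
Qed.

Lemma card_desc_proper x : #|desc x :\ x| <= #|children x| * #|desc (heavy x)|.
Proof.
have to_child : {in desc x :\ x, forall y, ancestor_at (depth x).+1 y \in children x}.
  by move=> y /[!inE] /andP [y_x xy]; case: (child_ancestor_at xy y_x).
rewrite (card_fiber to_child) -sum_nat_const; apply: leq_sum => z /[!inE] zx.
apply: leq_trans (heavyP zx).2; apply/subset_leq_card/subsetP => y.
by rewrite !inE => /andP [/andP [y_x xy] /eqP <-]; case: (child_ancestor_at xy y_x).
Qed.

Lemma pruned_below_core x : cut_vertex x ->
  [set y in below_core (depth x + 2) | ancestor_at (depth x) y == x]
    \subset (desc x :\ x) :\: desc (heavy x).
Proof.
move=> cut_x; apply/subsetP => y.
rewrite in_set in_below_core in_setD in_setD1 !in_desc.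
move=> /andP [/and3P [_ dy y_core] /eqP x_y].
have [ay dy'] := ancestor_atP (leq_trans (leq_addr 2 _) dy); rewrite x_y in ay dy'.
rewrite ay andbT; apply/andP; split.
  apply: contraTN y_core => hy; rewrite inE negb_and negbK; apply/orP; right.
  apply/existsP; exists x; rewrite cut_x /=.
  have [hz dz] := ancestor_atP dy.
  apply: ancestor_chain hy hz _.
  by rewrite dz (child_depth (cut_vertex_heavy cut_x)) addn2.
by apply: contraTneq dy => ->; lia.
Qed.

(* The heavy child subtree, cut off at the cut vertex x, is the largest of at most
   D - 1 child subtrees. *)
Lemma card_pruned_fiber x : x \in core -> depth c + 2 <= depth x <= depth c + 2 * R ->
  ~~ odd (depth x - depth c) ->
  (D - 1) * #|[set y in below_core (depth x + 2) | ancestor_at (depth x) y == x]|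
    <= (D - 2) * #|desc x|.
Proof.
move=> x_core /andP [dx_lo dx_hi] even_x.
set G := [set y in _ | _]; have [->|[y yG]] := set_0Vmem G; first by rewrite cards0 muln0.
have cut_x : cut_vertex x.
  move: yG; rewrite in_set in_below_core => /andP [/and3P [_ dy _] /eqP x_y].
  have [xy _] := ancestor_atP (leq_trans (leq_addr 2 _) dy); rewrite x_y in xy.
  have y_x : y != x by apply: contraTneq dy => ->; lia.
  have [zx _] := child_ancestor_at xy y_x.
  by rewrite /cut_vertex core_ancestor // dx_lo dx_hi even_x (heavyP zx).1.
have x_r : x != r by rewrite -depth_gt0; lia.
set A := desc x :\ x; set t := #|desc (heavy x)|.
have heavy_A : desc (heavy x) \subset A by apply/desc_child_sub/cut_vertex_heavy.
have cG : #|G| <= #|A| - t.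
  by rewrite /t -(setIidPr heavy_A) -cardsD subset_leq_card // pruned_below_core.
have cA : #|A| <= (D - 1) * t.
  apply: leq_trans (card_desc_proper x) _; rewrite leq_mul2r.
  by have := card_children_le x; rewrite x_r; lia.
have cAt : (D - 1) * (#|A| - t) <= (D - 2) * #|A| by nia.
rewrite [#|desc x|](cardsD1 x) in_desc ancestor_refl.
by apply: leq_trans (leq_mul (leqnn _) cG) (leq_trans cAt _); rewrite leq_mul2l leq_addl orbT.
Qed.

Lemma card_below_core_step j : 0 < j <= R ->
  (D - 1) * #|below_core (depth c + 2 * j + 2)|
    <= (D - 2) * #|below_core (depth c + 2 * j)|.
Proof.
move=> /andP [j_gt0 j_R]; set L := depth c + 2 * j.
set Y := [set x in core | depth x == L].
have to_Y L' : L <= L' -> {in below_core L', forall y, ancestor_at L y \in Y}.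
  move=> LL' y; rewrite in_below_core => /and3P [cy dy y_core].
  have [ay day] := ancestor_atP (leq_trans LL' dy); have [ay' day'] := ancestor_atP dy.
  rewrite inE day eqxx andbT; apply: (core_ancestor_closed y_core).
    by apply: ancestor_chain ay ay' _; rewrite day day'.
  by apply: ancestor_chain cy ay _; rewrite day leq_addr.
rewrite (card_fiber (to_Y _ (leq_addr 2 L))) (card_fiber (to_Y _ (leqnn L))) !big_distrr.
apply: leq_sum => x /setIdP [x_core /eqP dx].
rewrite -dx below_core_fiber //; apply: card_pruned_fiber => //; first by rewrite dx /L; lia.
by rewrite dx /L addnC addnK oddM.
Qed.

Lemma card_below_core_iter i : i <= R ->
  (D - 1) ^ i * #|below_core (depth c + 2 + 2 * i)|
    <= (D - 2) ^ i * #|below_core (depth c + 2)|.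
Proof.
elim: i => [|i IH] i_R; first by rewrite !expn0 !mul1n muln0 addn0.
have := card_below_core_step (j := i.+1); rewrite i_R => /(_ isT).
have -> : depth c + 2 * i.+1 + 2 = depth c + 2 + 2 * i.+1 by lia.
have -> : depth c + 2 * i.+1 = depth c + 2 + 2 * i by lia.
move=> step.
apply: leq_trans (_ : (D - 1) ^ i * ((D - 2) * #|below_core (depth c + 2 + 2 * i)|) <= _).
  by rewrite expnS (mulnC (D - 1)) -mulnA leq_mul2l step orbT.
by rewrite mulnCA expnS -mulnA leq_mul2l IH ?orbT // ltnW.
Qed.

Lemma core_sub_upto_below :
  core \subset desc_upto (2 * R).+1 :|: below_core (depth c + 2 + 2 * R).
Proof.
apply/subsetP => y y_core; have cy := core_ancestor y_core.
rewrite in_setU inE in_below_core cy /=.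
case: (leqP (depth y) (depth c + (2 * R).+1)) => [//|deep_y] /=.
have dy : depth c + 2 + 2 * R <= depth y by lia.
have [ay day] := ancestor_atP dy; rewrite dy (core_ancestor_closed y_core ay) //.
by apply: ancestor_chain cy ay _; rewrite day -addnA leq_addr.
Qed.

Lemma card_core : R = 2 * D -> 2 <= D -> 3 * #|core| < 3 * D ^ (4 * D + 2) + #|V|.
Proof.
move=> R_2D D_ge2.
have upto := card_desc_upto (2 * R).+1 D_ge2.
have below : 3 * #|below_core (depth c + 2 + 2 * R)| <= #|V|.
  apply: (@three_mul_le ((D - 1) ^ R) ((D - 2) ^ R)).
  - by rewrite expn_gt0; apply/orP; left; lia.
  - apply: leq_trans (card_below_core_iter (leqnn R)) _.
    by rewrite leq_mul2l max_card orbT.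
  - by rewrite R_2D three_expn_le.
rewrite (_ : (2 * R).+2 = 4 * D + 2) in upto; last by lia.
have := leq_trans (subset_leq_card core_sub_upto_below) (leq_card_setU _ _); lia.
Qed.

Lemma card_hull_core_le : R = 2 * D -> 2 <= D ->
  #|hull core core_edges (edge_vertices matching_edges :&: core)| <= D ^ (4 * D + 1).
Proof.
move=> R_2D D_ge2; apply: leq_trans card_hull_core (ltnW _).
by rewrite (_ : 4 * D + 1 = (2 * R).+1) ?card_desc_upto //; lia.
Qed.

End BoundedDegree.
End Core.
End RootedTree.

Theorem lemma8p1 : forall Delta : nat, exists k0 : nat, forall k : nat, k0 <= k ->
  forall (V : finType) (E : {set {set V}}),
    is_graph E -> is_tree [set: V] E -> #|E| = k ->
    (forall v : V, degree E v <= Delta) ->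
    exists (VS : {set V}) (ES : {set {set V}}) (VF : {set V}) (EF : {set {set V}})
           (EM : {set {set V}}),
      [/\ subgraph E VS ES, subgraph E VF EF, EM \subset E & is_matching EM] /\
      is_tree VS ES /\ is_forest VF EF /\
      (* edge sets partition E(T) *)
      [/\ [disjoint ES & EF], [disjoint ES & EM], [disjoint EF & EM]
        & ES :|: EF :|: EM = E] /\
      (* (a) *) [disjoint VS & VF] /\
      (* (b) *) (forall e, e \in EM -> #|e :&: VS| = 1 /\ #|e :&: VF| = 1) /\
      (* (c) *) (#|VS| <= uphalf k /\ forall x, x \in VF -> #|component VF EF x| <= uphalf k) /\
      (* (d) *) same_class E (edge_vertices EM :&: VS) /\
      (* (e) *) #|hull VS ES (edge_vertices EM :&: VS)| <= Delta ^ (4 * Delta + 1).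
Proof.
move=> D; exists (6 * D ^ (4 * D + 2) + 6) => k k_large V E E_graph.
move=> [/set0Pn [r _] [E_conn E_acyclic]] card_E degree_le.
have card_V : #|V| = k.+1 by rewrite -(card_edges E_graph E_conn E_acyclic r) card_E.
have D_ge2 : 2 <= D.
  rewrite leqNgt; apply/negP => D_le1.
  by have := small_degree_card E_conn r D_le1 degree_le; lia.
have V_le : #|V| <= (uphalf k).*2.+1 by lia.
have V_gt : uphalf k < #|V| by lia.
have [c [child_small outside_small]] := exists_balanced_vertex E_conn r V_le V_gt.
pose S := core E_conn r c (2 * D).
exists S, (core_edges E_conn r c (2 * D)), (~: S), (forest_edges E_conn r c (2 * D)),
  (matching_edges E_conn r c (2 * D)).
split; first split.
- exact: core_subgraph.
- exact: forest_subgraph.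
- exact: subsetDl.
- exact: matching_edges_matching.
split; first exact: core_tree.
split; first exact: forest_edges_forest.
split; first exact: edge_partition.
split; first by rewrite disjoints_subset setCK.
split; first exact: matching_edge_split.
split; first split.
- by have := card_core E_conn r c degree_le (erefl _) D_ge2; rewrite -/S; lia.
- exact: card_forest_component.
split; first exact: matching_core_same_class.
exact: card_hull_core_le.
Qed.
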